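(* Let $w=w_1w_2\cdots w_n$ be a finite word over $\{0,1\}$ of length $n\ge 2$, and let $\hat e_w$ be the projection $\phi\mapsto\langle\phi,e_w\rangle e_w$. Then $\|K\hat e_w-\hat e_wK\|=1$, $\|L\hat e_w-\hat e_wL\|=1$, and therefore $\|[\mathcal D,\pi(\hat e_w)]\|=1$.
   Context: $\Omega=\{0,1\}^{\mathbb N}$ with the shift $\sigma$; for $a\in\{0,1\}$, $ax=(a,x_1,\dots)$. $\mu$ is the measure of maximal entropy (uniform Bernoulli product measure), $L^2(\mu)$ the real Hilbert space with inner product $\langle\cdot,\cdot\rangle$. For a finite word $v$, $[v]$ is the cylinder of sequences beginning with $v$, $\chi_{[v]}$ its indicator, $\ell(v)$ its length, and $v0,v1$ the concatenations. For a nonempty word $w$, $e_w=2^{\ell(w)/2}(\chi_{[w1]}-\chi_{[w0]})$. Ruelle operator $L\phi(x)=\frac12(\phi(0x)+\phi(1x))$; Koopman operator $K\phi=\phi\circ\sigma$. On $\mathcal H=L^2(\mu)\times L^2(\mu)$ (norm $|(\phi_1,\phi_2)|^2=|\phi_1|^2+|\phi_2|^2$), $\mathcal D=\begin{pmatrix}0&K\\ L&0\end{pmatrix}$ and $\pi(A)=\begin{pmatrix}A&0\\0&A\end{pmatrix}$ for bounded $A$ on $L^2(\mu)$; $[\mathcal D,\pi(A)]=\mathcal D\pi(A)-\pi(A)\mathcal D$. $\|\cdot\|$ is the operator norm. *)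

From HB Require Import structures.
From mathcomp Require Import all_boot all_order all_algebra.
From mathcomp Require Import all_classical all_reals all_analysis.
Set Implicit Arguments. Unset Strict Implicit. Unset Printing Implicit Defensive.
Import Order.TTheory GRing.Theory Num.Theory.
Local Open Scope classical_set_scope.
Local Open Scope ring_scope.

(* Finite words over {0,1} are [seq bool] (false = 0, true = 1);
   sequences x = (x_1, x_2, ...) are [nat -> bool], x_{i+1} = x i. *)

Definition cyl (v : seq bool) : set (nat -> bool) :=
  [set x | forall i : nat, (i < size v)%N -> x i = nth false v i].

Definition Omega : Type := g_sigma_algebraType (range cyl).

Definition shift (x : Omega) : Omega := fun n => x n.+1.
Definition pcons (a : bool) (x : Omega) : Omega :=
  fun n => if n is m.+1 then x m else a.

Section Ops.
Variable R : realType.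

Definition koopman (f : Omega -> R) : Omega -> R := fun x => f (shift x).
Definition ruelle (f : Omega -> R) : Omega -> R :=
  fun x => (f (pcons false x) + f (pcons true x)) / 2.

Definition e_w (w : seq bool) : Omega -> R :=
  fun x => Num.sqrt (2 ^+ size w) *
           (\1_(cyl (rcons w true)) x - \1_(cyl (rcons w false)) x).

Variable mu : {measure set Omega -> \bar R}.

Definition inner (f g : Omega -> R) : R := fine (\int[mu]_x (f x * g x)%:E).

Definition proj_e (w : seq bool) (f : Omega -> R) : Omega -> R :=
  fun x => inner f (e_w w) * e_w w x.

Definition L2norm (f : Omega -> R) : \bar R := Lnorm mu 2%:E (EFin \o f).

Definition opnorm (T : (Omega -> R) -> (Omega -> R)) : \bar R :=
  ereal_sup [set L2norm (T f) | f in
     [set f : Omega -> R | measurable_fun [set: Omega] f /\ (L2norm f <= 1)%E]].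

Definition comm (A B : (Omega -> R) -> (Omega -> R)) (f : Omega -> R) :
  Omega -> R := fun x => A (B f) x - B (A f) x.

Definition Hnorm (p : (Omega -> R) * (Omega -> R)) : \bar R :=
  ((L2norm p.1 `^ 2%R) + (L2norm p.2 `^ 2%R)) `^ (2^-1)%R.

Definition opnormH
    (T : (Omega -> R) * (Omega -> R) -> (Omega -> R) * (Omega -> R)) : \bar R :=
  ereal_sup [set Hnorm (T p) | p in
     [set p : (Omega -> R) * (Omega -> R) |
        [/\ measurable_fun [set: Omega] p.1, measurable_fun [set: Omega] p.2
          & (Hnorm p <= 1)%E]]].

(** D = [[0, K], [L, 0]] and pi(A) = diag(A, A) *)
Definition Dop (p : (Omega -> R) * (Omega -> R)) : (Omega -> R) * (Omega -> R) :=
  (koopman p.2, ruelle p.1).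
Definition piop (A : (Omega -> R) -> (Omega -> R))
    (p : (Omega -> R) * (Omega -> R)) : (Omega -> R) * (Omega -> R) :=
  (A p.1, A p.2).

Definition Dcomm (A : (Omega -> R) -> (Omega -> R))
    (p : (Omega -> R) * (Omega -> R)) : (Omega -> R) * (Omega -> R) :=
  let q := Dop (piop A p) in let r := piop A (Dop p) in
  (fun x => q.1 x - r.1 x, fun x => q.2 x - r.2 x).

End Ops.

From Pilot Require Import Defs.
From HB Require Import structures.
From mathcomp Require Import all_boot all_order all_algebra.
From mathcomp Require Import all_classical all_reals all_analysis.
From mathcomp Require Import ring lra measurable_realfun.
Set Implicit Arguments. Unset Strict Implicit. Unset Printing Implicit Defensive.
Import Order.TTheory GRing.Theory Num.Theory.
(* Re-import so that [shift] is the shift on [Omega], not the [shift] of analysis. *)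
Import Pilot.Defs.
Local Open Scope classical_set_scope.
Local Open Scope ring_scope.

(* Write w = a w' and e := e_w.  The Bernoulli measure is invariant under the
   shift, so K is an isometry whose adjoint is L; moreover L e = 2^(-1/2) e_w',
   and e_w' is orthogonal to e because Haar functions of different levels are.
   Hence K e_hat - e_hat K maps f to <f,e> K e - <f,L e> e and
   L e_hat - e_hat L maps f to <f,e> L e - <f,K e> e, where {e, K e} and
   {e, L e} are orthogonal pairs with |e| = |K e| = 1 and |L e|^2 = 1/2.
   Bessel's inequality bounds both commutators by 1, and the bounds are
   attained at e and K e.  Finally [D, pi(e_hat)] acts on L^2 x L^2 as these
   two commutators on swapped components, so its norm is 1 too. *)

Lemma cyl_measurable (v : seq bool) : measurable (cyl v : set Omega).
Proof. by apply: sub_sigma_algebra; exists v. Qed.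

Lemma cyl_nil : cyl [::] = [set: Omega].
Proof. by apply/seteqP; split => // x _ i. Qed.

Lemma cyl_cons (a : bool) (v : seq bool) (x : Omega) :
  cyl (a :: v) x <-> x 0%N = a /\ cyl v (shift x).
Proof.
split => [xav|[x0 xv] [|i] //= ?]; last exact: xv.
by split => [|i ?]; [exact: (xav 0%N) | exact: (xav i.+1)].
Qed.

Definition flip_head (x : Omega) : Omega :=
  fun n => if n is 0%N then ~~ x 0%N else x n.

Lemma preimage_shift_cyl (v : seq bool) :
  shift @^-1` cyl v = cyl (false :: v) `|` cyl (true :: v).
Proof.
apply/seteqP; split => x /=.
  by case x0: (x 0%N) => xv; [right | left]; apply/cyl_cons.
by case=> /cyl_cons [].
Qed.

Lemma preimage_flip_head_cyl (a : bool) (v : seq bool) :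
  flip_head @^-1` cyl (a :: v) = cyl (~~ a :: v).
Proof.
apply/seteqP; split => x /= /cyl_cons [x0 xv]; apply/cyl_cons; split => //.
  by rewrite -x0 negbK.
by rewrite /flip_head x0 negbK.
Qed.

Lemma preimage_pcons_cyl (a b : bool) (v : seq bool) :
  pcons a @^-1` cyl (b :: v) = if a == b then cyl v else set0.
Proof.
apply/seteqP; split => x /=; first by case/cyl_cons => /= -> ?; rewrite eqxx.
by case: eqP => [<- xv | //]; apply/cyl_cons.
Qed.

Lemma measurable_fun_cyl (f : Omega -> Omega) :
  (forall v, measurable (f @^-1` cyl v)) -> measurable_fun [set: Omega] f.
Proof.
move=> fv; apply: (@measurability _ _ _ _ _ f (range cyl)) => //.
by move=> _ [_ [v _ <-] <-]; rewrite setTI.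
Qed.

Lemma measurable_shift : measurable_fun [set: Omega] shift.
Proof.
apply: measurable_fun_cyl => v; rewrite preimage_shift_cyl.
by apply: measurableU; exact: cyl_measurable.
Qed.

Lemma measurable_flip_head : measurable_fun [set: Omega] flip_head.
Proof.
apply: measurable_fun_cyl => -[|a v]; first by rewrite cyl_nil preimage_setT.
by rewrite preimage_flip_head_cyl; exact: cyl_measurable.
Qed.

Lemma measurable_pcons (a : bool) : measurable_fun [set: Omega] (pcons a).
Proof.
apply: measurable_fun_cyl => -[|b v]; first by rewrite cyl_nil preimage_setT.
by rewrite preimage_pcons_cyl; case: eqP => _; [exact: cyl_measurable |].
Qed.

Lemma setI_cyl (u v : seq bool) :
  cyl u `&` cyl v = set0 \/ exists t, cyl u `&` cyl v = cyl t.
Proof.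
elim: u v => [|a u IH] v; first by right; exists v; rewrite cyl_nil setTI.
case: v => [|b v]; first by right; exists (a :: u); rewrite cyl_nil setIT.
have [<-|ab] := eqVneq a b; last first.
  left; apply/seteqP; split => // x [/cyl_cons [xa _] /cyl_cons [xb _]].
  by rewrite -xa -xb eqxx in ab.
have consI : cyl (a :: u) `&` cyl (a :: v) = [set x | x 0%N = a /\ (cyl u `&` cyl v) (shift x)].
  apply/seteqP; split => x /=.
    by case=> /cyl_cons [-> xu] /cyl_cons [_ xv].
  by case=> x0 [xu xv]; split; apply/cyl_cons.
rewrite consI; case: (IH v) => [->|[t ->]]; [left | right; exists (a :: t)].
  by apply/seteqP; split => x // [].
by apply/seteqP; split => x /cyl_cons.
Qed.

Lemma cyl_measure_unique (R : realType) (m1 m2 : {measure set Omega -> \bar R}) :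
  (m1 [set: Omega] < +oo)%E -> (forall v, m1 (cyl v) = m2 (cyl v)) ->
  forall A, measurable A -> m1 A = m2 A.
Proof.
move=> m1T m12; pose G := [set A : set Omega | A = set0 \/ range cyl A].
apply: (@measure_unique _ _ _ G (fun=> [set: Omega])) => //; rewrite /G.
- apply/seteqP; split; first by apply: sub_sigma_algebra2 => A ?; right.
  apply: smallest_sub; first exact: smallest_sigma_algebra.
  by move=> A [->|?]; [exact: measurable0 | exact: sub_sigma_algebra].
- move=> A B [->|[u _ <-]]; first by left; rewrite set0I.
  move=> [->|[v _ <-]]; first by left; rewrite setI0.
  by case: (setI_cyl u v) => [?|[t ?]]; [left | right; exists t].
- by move=> _; right; exists [::]; rewrite ?cyl_nil.
- by rewrite bigcup_const.
- by move=> _ [->|[v _ <-]]; rewrite ?measure0.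
Qed.

Lemma measure_preserving_cyl (R : realType) (mu : {measure set Omega -> \bar R})
    (phi : Omega -> Omega) : measurable_fun [set: Omega] phi ->
  (mu [set: Omega] < +oo)%E -> (forall v, mu (phi @^-1` cyl v) = mu (cyl v)) ->
  forall A, measurable A -> mu (phi @^-1` A) = mu A.
Proof.
move=> mphi muT phi_cyl.
by apply: (@cyl_measure_unique R (pushforward mu phi)); rewrite // /pushforward preimage_setT.
Qed.

Section measure_preserving_integral.
Context d (T : measurableType d) (R : realType).
Variables (mu : {measure set T -> \bar R}) (phi : T -> T).
Hypothesis mphi : measurable_fun [set: T] phi.
Hypothesis phi_preserving : forall A, measurable A -> mu (phi @^-1` A) = mu A.

Lemma ge0_integral_comp_preserving (D : set T) (G : T -> \bar R) :
  measurable D -> measurable_fun [set: T] G -> (forall x, (0 <= G x)%E) ->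
  (\int[mu]_(x in phi @^-1` D) G (phi x) = \int[mu]_(x in D) G x)%E.
Proof.
move=> mD mG G0; rewrite -(ge0_integral_pushforward mphi) //; last exact: measurable_funTS.
by apply: eq_measure_integral => A mA _; exact: phi_preserving.
Qed.

Lemma integrable_comp_preserving (D : set T) (G : T -> \bar R) :
  measurable D -> measurable_fun [set: T] G -> mu.-integrable D G ->
  mu.-integrable (phi @^-1` D) (G \o phi).
Proof.
move=> mD mG /integrableP [_ iG]; apply/integrableP; split.
  by apply: measurable_funTS; exact: measurableT_comp.
rewrite (ge0_integral_comp_preserving (G := abse \o G)) //.
  exact: measurableT_comp.
by move=> x; exact: abse_ge0.
Qed.

Lemma integral_comp_preserving (D : set T) (G : T -> \bar R) :
  measurable D -> measurable_fun [set: T] G ->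
  (forall x, (0 <= G x)%E) \/ mu.-integrable D G ->
  (\int[mu]_(x in phi @^-1` D) G (phi x) = \int[mu]_(x in D) G x)%E.
Proof.
move=> mD mG [G0|iG]; first exact: ge0_integral_comp_preserving.
rewrite -(integral_pushforward mphi) //; last exact: integrable_comp_preserving.
by apply: eq_measure_integral => A mA _; exact: phi_preserving.
Qed.

End measure_preserving_integral.

Lemma cyl_false_trueI (v : seq bool) : cyl (false :: v) `&` cyl (true :: v) = set0.
Proof. by apply/seteqP; split => // x [/cyl_cons [x0 _] /cyl_cons []]; rewrite x0. Qed.

Lemma cyl_false_trueU : cyl [:: false] `|` cyl [:: true] = [set: Omega].
Proof. by rewrite -preimage_shift_cyl cyl_nil preimage_setT. Qed.

Section bernoulli.
Variables (R : realType) (mu : {measure set Omega -> \bar R}).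
Hypothesis mu_cyl : forall v, mu (cyl v) = ((2 : R) ^- size v)%:E.

Lemma mu_setT : mu [set: Omega] = 1%E.
Proof. by rewrite -cyl_nil mu_cyl expr0 invr1. Qed.

Lemma shift_preserving A : measurable A -> mu (shift @^-1` A) = mu A.
Proof.
apply: (measure_preserving_cyl measurable_shift); first by rewrite mu_setT ltry.
move=> v; rewrite preimage_shift_cyl measureU ?cyl_false_trueI //; try exact: cyl_measurable.
move: (mu_cyl (false :: v)) (mu_cyl (true :: v)) => /= -> ->.
rewrite mu_cyl -EFinD /= exprS invfM -mulrDl; congr (_%:E); lra.
Qed.

Lemma flip_head_preserving A : measurable A -> mu (flip_head @^-1` A) = mu A.
Proof.
apply: (measure_preserving_cyl measurable_flip_head); first by rewrite mu_setT ltry.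
by case=> [|a v]; rewrite ?cyl_nil ?preimage_setT // preimage_flip_head_cyl !mu_cyl.
Qed.

Lemma integral_cyl1_shift (a : bool) (G : Omega -> \bar R) :
  measurable_fun [set: Omega] G ->
  (forall x, (0 <= G x)%E) \/ mu.-integrable [set: Omega] G ->
  (\int[mu]_(x in cyl [:: a]) G (shift x) + \int[mu]_(x in cyl [:: a]) G (shift x)
   = \int[mu]_x G x)%E.
Proof.
move=> mG hG.
have mGs : measurable_fun [set: Omega] (G \o shift) := measurableT_comp mG measurable_shift.
have hGs : (forall x, (0 <= G (shift x))%E) \/ mu.-integrable [set: Omega] (G \o shift).
  case: hG => [G0|iG]; [by left | right].
  have := integrable_comp_preserving measurable_shift shift_preserving measurableT mG iG.
  by rewrite preimage_setT.
(* [flip_head] exchanges [cyl [:: false]] and [cyl [:: true]] and commutes with [shift]. *)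
have flip_sym : (\int[mu]_(x in cyl [:: true]) G (shift x)
                 = \int[mu]_(x in cyl [:: false]) G (shift x))%E.
  rewrite -(preimage_flip_head_cyl false [::]).
  apply: (integral_comp_preserving measurable_flip_head flip_head_preserving
            (cyl_measurable _) mGs).
  case: hGs => [G0|iG]; [by left | right].
  exact: integrableS measurableT (cyl_measurable _) (@subsetT _ _) iG.
rewrite -(integral_comp_preserving measurable_shift shift_preserving measurableT mG) //.
rewrite preimage_setT -cyl_false_trueU integral_setU //; try exact: cyl_measurable.
- by case: a; rewrite flip_sym.
- exact: measurable_funTS.
- by apply/disj_set2P; exact: cyl_false_trueI.
Qed.

End bernoulli.

Section square_integrable.
Variables (R : realType) (mu : {measure set Omega -> \bar R}).
Local Notation ip := (inner mu).

Definition L2 (f : Omega -> R) := measurable_fun [set: Omega] f /\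
  mu.-integrable [set: Omega] (fun x => (f x ^+ 2)%:E).

Lemma L2_integrable_mul (f g : Omega -> R) : L2 f -> L2 g ->
  mu.-integrable [set: Omega] (fun x => (f x * g x)%:E).
Proof.
move=> [mf if2] [mg ig2].
apply: (le_integrable measurableT (g := fun x => ((f x ^+ 2)%:E + (g x ^+ 2)%:E)%E)).
- by apply/measurable_EFinP; exact: measurable_funM.
- move=> x _ /=; rewrite lee_fin [leRHS]ger0_norm ?addr_ge0 ?sqr_ge0 // normrM.
  rewrite -(real_normK (num_real (f x))) -(real_normK (num_real (g x))).
  by have := sqr_ge0 (`|f x| - `|g x|); nra.
- exact: integrableD.
Qed.

Lemma L2_lin (a b : R) (f g : Omega -> R) : L2 f -> L2 g ->
  L2 (fun x => a * f x + b * g x).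
Proof.
move=> Lf Lg; split.
  by case: Lf Lg => mf _ [mg _]; apply: measurable_funD; exact: measurable_funM.
apply: (eq_integrable measurableT (fun x => ((a ^+ 2)%:E * (f x * f x)%:E
    + ((2 * a * b)%:E * (f x * g x)%:E + (b ^+ 2)%:E * (g x * g x)%:E))%E)) => //.
  by move=> x _; rewrite -!EFinM -!EFinD; congr (_%:E); ring.
have intZ h1 h2 k : L2 h1 -> L2 h2 ->
    mu.-integrable [set: Omega] (fun x => (k%:E * (h1 x * h2 x)%:E)%E).
  by move=> Lh1 Lh2; apply: integrableZl => //; exact: L2_integrable_mul.
by apply: integrableD => //; [exact: intZ | apply: integrableD => //; exact: intZ].
Qed.

Lemma L2Z (k : R) (f : Omega -> R) : L2 f -> L2 (fun x => k * f x).
Proof.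
move=> Lf; have := L2_lin k 0 Lf Lf.
by congr L2; apply: funext => x; rewrite mul0r addr0.
Qed.

Lemma L2_0 : L2 (fun=> 0).
Proof.
split; first exact: measurable_cst.
apply: (eq_integrable measurableT (cst 0%E)) => //; last exact: integrable0.
by move=> x _; rewrite expr0n.
Qed.

Lemma innerE (f g : Omega -> R) : ip f g = (\int[mu]_x (f x * g x))%R.
Proof. by []. Qed.

Lemma innerC (f g : Omega -> R) : ip f g = ip g f.
Proof. by rewrite /inner; congr fine; apply: eq_integral => x _; rewrite mulrC. Qed.

Lemma inner_linl (a b : R) (f g h : Omega -> R) : L2 f -> L2 g -> L2 h ->
  ip (fun x => a * f x + b * g x) h = a * ip f h + b * ip g h.
Proof.
move=> Lf Lg Lh; have ifh := L2_integrable_mul Lf Lh; have igh := L2_integrable_mul Lg Lh.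
have iafh := integrableZl measurableT a ifh; have ibgh := integrableZl measurableT b igh.
rewrite !innerE; under eq_Rintegral do rewrite mulrDl -!mulrA.
by rewrite RintegralD ?RintegralZl.
Qed.

Lemma inner_linr (a b : R) (f g h : Omega -> R) : L2 f -> L2 g -> L2 h ->
  ip h (fun x => a * f x + b * g x) = a * ip h f + b * ip h g.
Proof. by move=> *; rewrite innerC inner_linl // (innerC f) (innerC g). Qed.

Lemma innerZl (k : R) (f g : Omega -> R) : L2 f -> L2 g ->
  ip (fun x => k * f x) g = k * ip f g.
Proof.
move=> Lf Lg; have := inner_linl k 0 Lf Lf Lg; rewrite mul0r addr0 => <-.
by congr inner; apply: funext => x; rewrite mul0r addr0.
Qed.

Lemma innerZr (k : R) (f g : Omega -> R) : L2 f -> L2 g ->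
  ip g (fun x => k * f x) = k * ip g f.
Proof. by move=> Lf Lg; rewrite innerC innerZl // innerC. Qed.

Lemma inner0l (g : Omega -> R) : ip (fun=> 0) g = 0.
Proof.
rewrite /inner (eq_integral (fun=> 0%E)) ?integral0 //.
by move=> x _; rewrite mul0r.
Qed.

Lemma inner_ge0 (f : Omega -> R) : 0 <= ip f f.
Proof. by apply: fine_ge0; apply: integral_ge0 => x _; rewrite lee_fin -expr2 sqr_ge0. Qed.

Lemma inner_lin_self (a b : R) (u v : Omega -> R) : L2 u -> L2 v ->
  ip (fun x => a * u x + b * v x) (fun x => a * u x + b * v x) =
  a ^+ 2 * ip u u + 2 * a * b * ip u v + b ^+ 2 * ip v v.
Proof.
move=> Lu Lv; rewrite inner_linl ?inner_linr //; last exact: L2_lin.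
by rewrite (innerC v u); ring.
Qed.

(* Expand |f - <f,u> u - (<f,v>/s) v|^2 >= 0. *)
Lemma bessel2 (f u v : Omega -> R) (s : R) : L2 f -> L2 u -> L2 v ->
  ip u u = 1 -> ip v v = s -> 0 < s -> ip u v = 0 ->
  ip f u ^+ 2 + ip f v ^+ 2 / s <= ip f f.
Proof.
move=> Lf Lu Lv uu vv s0 uv.
have := inner_ge0 (fun x => 1 * (1 * f x + (- ip f u) * u x) + (- (ip f v / s)) * v x).
rewrite inner_lin_self ?inner_lin_self ?inner_linl //; last exact: L2_lin.
rewrite uu vv uv.
suff -> : 1 ^+ 2 * (1 ^+ 2 * ip f f + 2 * 1 * - ip f u * ip f u + (- ip f u) ^+ 2 * 1) +
  2 * 1 * - (ip f v / s) * (1 * ip f v + - ip f u * 0) + (- (ip f v / s)) ^+ 2 * s =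
  ip f f - ip f u ^+ 2 - ip f v ^+ 2 / s by lra.
by field; rewrite gt_eqF.
Qed.

Lemma L2normE (f : Omega -> R) :
  L2norm mu f = ((\int[mu]_x (f x ^+ 2)%:E) `^ 2^-1)%E.
Proof.
rewrite /L2norm unlock; congr (_ `^ _)%E; apply: eq_integral => x _.
rewrite -[(EFin \o f) x]/(f x)%:E abse_EFin poweR_EFin powR_mulrn //.
by rewrite -(real_normK (num_real (f x))).
Qed.

Lemma integral_sqr (f : Omega -> R) : L2 f -> (\int[mu]_x (f x ^+ 2)%:E)%E = (ip f f)%:E.
Proof.
move=> [_ if2]; rewrite /inner fineK; first by apply: eq_integral => x _; rewrite expr2.
by have := integrable_fin_num measurableT if2; under eq_integral do rewrite expr2.
Qed.

Lemma L2norm_inner (f : Omega -> R) : L2 f -> L2norm mu f = (Num.sqrt (ip f f))%:E.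
Proof. by move=> Lf; rewrite L2normE integral_sqr // poweR_EFin powR12_sqrt ?inner_ge0. Qed.

Lemma L2norm_cases (f : Omega -> R) : measurable_fun [set: Omega] f ->
  L2norm mu f = +oo%E \/ L2 f.
Proof.
move=> mf; have mf2 : measurable_fun [set: Omega] (fun x => (f x ^+ 2)%:E).
  by apply/measurable_EFinP; exact: measurable_funX.
have : (0 <= \int[mu]_x (f x ^+ 2)%:E)%E.
  by apply: integral_ge0 => x _; rewrite lee_fin sqr_ge0.
case hI : (\int[mu]_x (f x ^+ 2)%:E)%E => [r| |] // _; last by left; rewrite L2normE hI poweRyr.
right; split => //; apply/integrableP; split => //.
rewrite (eq_integral (fun x => (f x ^+ 2)%:E)) ?hI ?ltry // => x _.
by rewrite abse_EFin ger0_norm // sqr_ge0.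
Qed.

Lemma L2_of_L2norm_le1 (f : Omega -> R) : measurable_fun [set: Omega] f ->
  (L2norm mu f <= 1)%E -> L2 f /\ ip f f <= 1.
Proof.
case/L2norm_cases => [->|Lf]; first by rewrite leye_eq.
by rewrite L2norm_inner // lee_fin -{1}sqrtr1 ler_sqrt.
Qed.

End square_integrable.

Lemma cyl_rcons_prefix (u v : seq bool) (t : bool) (x : Omega) :
  (size v <= size u)%N -> cyl (rcons u t) x -> cyl v x <-> v = take (size v) u.
Proof.
move=> vu xut; have xu i : (i < size v)%N -> x i = nth false u i.
  by move=> iv; rewrite xut ?nth_rcons ?(leq_trans iv vu) // size_rcons ltnS (leq_trans (ltnW iv)).
split => [xv | vu' i iv]; first last.
  by rewrite xu // vu' nth_take.
apply: (@eq_from_nth _ false); first by rewrite size_takel.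
by move=> i iv; rewrite nth_take // -xu // xv.
Qed.

Lemma cyl_rcons_trueI (u : seq bool) : cyl (rcons u true) `&` cyl (rcons u false) = set0.
Proof.
apply/seteqP; split => // x [/(_ (size u)) xt /(_ (size u))].
by rewrite xt !size_rcons ltnSn // !nth_rcons ltnn eqxx => /(_ isT).
Qed.

Section haar.
Variables (R : realType) (mu : {measure set Omega -> \bar R}).
Hypothesis mu_cyl : forall v, mu (cyl v) = ((2 : R) ^- size v)%:E.
Local Notation ip := (inner mu).
Local Notation I v := (\1_(cyl v) : Omega -> R).

Lemma integrable_indic_cyl (v : seq bool) : mu.-integrable [set: Omega] (fun x => (I v x)%:E).
Proof.
apply/integrableP; split; first by apply/measurable_EFinP/measurable_indic; exact: cyl_measurable.
under eq_integral do rewrite abse_EFin ger0_norm //.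
by rewrite integral_indic ?setIT ?mu_cyl ?ltry //; exact: cyl_measurable.
Qed.

Lemma Rintegral_indic_cyl (v : seq bool) : (\int[mu]_x I v x)%R = 2 ^- size v.
Proof.
by rewrite /Rintegral integral_indic ?setIT ?mu_cyl //; exact: cyl_measurable.
Qed.

Lemma L2_indic_cyl (v : seq bool) : L2 mu (I v).
Proof.
split; first by apply: measurable_indic; exact: cyl_measurable.
apply: (eq_integrable measurableT _ _ _ (integrable_indic_cyl v)) => x _.
by rewrite /= indicE; case: (x \in _); rewrite ?expr1n ?expr0n.
Qed.

Lemma e_wE (w : seq bool) : e_w R w =
  (fun x => Num.sqrt (2 ^+ size w) * I (rcons w true) x
          + (- Num.sqrt (2 ^+ size w)) * I (rcons w false) x).
Proof. by apply: funext => x; rewrite /e_w; ring. Qed.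

Lemma L2_e_w (w : seq bool) : L2 mu (e_w R w).
Proof. by rewrite e_wE; apply: L2_lin; exact: L2_indic_cyl. Qed.

Lemma integrable_e_w (w : seq bool) : mu.-integrable [set: Omega] (EFin \o e_w R w).
Proof.
exact: (integrableZl measurableT _
  (integrableB measurableT (integrable_indic_cyl _) (integrable_indic_cyl _))).
Qed.

Lemma Rintegral_e_w (w : seq bool) : (\int[mu]_x e_w R w x)%R = 0.
Proof.
rewrite /e_w RintegralZl ?RintegralB ?Rintegral_indic_cyl ?size_rcons ?subrr ?mulr0 //;
  try exact: integrable_indic_cyl.
exact: (integrableB measurableT (integrable_indic_cyl _) (integrable_indic_cyl _)).
Qed.

Lemma inner_e_w (w : seq bool) : ip (e_w R w) (e_w R w) = 1.
Proof.
have sqr_e x : e_w R w x * e_w R w x = 2 ^+ size w * (I (rcons w true) x + I (rcons w false) x).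
  rewrite /e_w mulrACA -expr2 sqr_sqrtr ?exprn_ge0 //; congr (_ * _).
  have /seteqP [disj _] := cyl_rcons_trueI w; rewrite !indicE.
  case: (boolP (x \in cyl (rcons w true))) => [/set_mem xt|_];
  case: (boolP (x \in cyl (rcons w false))) => [/set_mem xf|_] /=; try ring.
  by case: (disj x (conj xt xf)).
rewrite innerE (eq_Rintegral _ (fun x _ => sqr_e x)) RintegralZl ?RintegralD
  ?Rintegral_indic_cyl ?size_rcons //; try exact: integrable_indic_cyl.
- by rewrite exprS invfM; field; exact: expf_neq0.
- exact: (integrableD measurableT (integrable_indic_cyl _) (integrable_indic_cyl _)).
Qed.

Lemma indic_cyl_prefix (u v : seq bool) (t : bool) (x : Omega) :
  (size v <= size u)%N -> cyl (rcons u t) x -> I v x = (v == take (size v) u)%:R.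
Proof.
move=> vu xut; have xv := cyl_rcons_prefix vu xut; rewrite indicE.
by case: eqP => [/xv/mem_set -> | nv]; rewrite // memNset // => /xv.
Qed.

Lemma inner_e_w_indic_cyl (u v : seq bool) :
  (size v <= size u)%N -> ip (e_w R u) (I v) = 0.
Proof.
move=> vu; pose k : R := (v == take (size v) u)%:R.
(* [I v] is constant, equal to [k], on the support of [e_w R u]. *)
have e_indic x : e_w R u x * I v x = k * e_w R u x.
  have [xt|nxt] := pselect (cyl (rcons u true) x).
    by rewrite (indic_cyl_prefix vu xt) mulrC.
  have [xf|nxf] := pselect (cyl (rcons u false) x).
    by rewrite (indic_cyl_prefix vu xf) mulrC.
  by rewrite /e_w !indicE (memNset nxt) (memNset nxf); ring.
by rewrite innerE (eq_Rintegral _ (fun x _ => e_indic x)) RintegralZl ?Rintegral_e_w ?mulr0 //;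
  exact: integrable_e_w.
Qed.

Lemma inner_e_w_lt (u v : seq bool) :
  (size v < size u)%N -> ip (e_w R u) (e_w R v) = 0.
Proof.
move=> vu; rewrite [e_w R v]e_wE inner_linr ?inner_e_w_indic_cyl ?size_rcons //;
  try exact: L2_indic_cyl; last exact: L2_e_w.
by rewrite !mulr0 addr0.
Qed.

End haar.

Lemma pcons_shift (a : bool) (x : Omega) : x 0%N = a -> pcons a (shift x) = x.
Proof. by move=> x0; apply: funext => -[|n]. Qed.

Lemma indic_cyl_pcons (R : realType) (a b : bool) (v : seq bool) (x : Omega) :
  \1_(cyl (a :: v)) (pcons b x) = (b == a)%:R * \1_(cyl v) x :> R.
Proof.
rewrite -[LHS]/(\1_(pcons b @^-1` cyl (a :: v)) x) preimage_pcons_cyl.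
by case: eqP => _; rewrite ?mul1r ?mul0r ?indic0.
Qed.

Lemma ruelle_e_w_cons (R : realType) (a : bool) (w : seq bool) :
  ruelle (e_w R (a :: w)) = (fun x => (Num.sqrt 2)^-1 * e_w R w x).
Proof.
have sqrt2_neq0 : Num.sqrt 2 != 0 :> R by rewrite sqrtr_eq0 -ltNge.
have sqrt2E : 2 = Num.sqrt 2 ^+ 2 :> R by rewrite sqr_sqrtr.
apply: funext => x; rewrite /ruelle /e_w !rcons_cons !indic_cyl_pcons /=.
rewrite exprSr sqrtrM ?exprn_ge0 //.
by rewrite [X in _ / X]sqrt2E; case: a => /=; field.
Qed.

Lemma EFin_half (R : realFieldType) (X : \bar R) (y : R) :
  (X + X)%E = y%:E -> X = (y / 2)%:E.
Proof. by case: X => [r [<-]| |] //; congr EFin; field. Qed.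

Section koopman_ruelle.
Variables (R : realType) (mu : {measure set Omega -> \bar R}).
Hypothesis mu_cyl : forall v, mu (cyl v) = ((2 : R) ^- size v)%:E.
Local Notation ip := (inner mu).

Lemma Rintegral_cyl1_shift (a : bool) (g : Omega -> R) : measurable_fun [set: Omega] g ->
  mu.-integrable [set: Omega] (EFin \o g) ->
  (\int[mu]_(x in cyl [:: a]) g (shift x) = (\int[mu]_x g x) / 2)%R.
Proof.
move=> mg ig; have := integral_cyl1_shift mu_cyl a ((measurable_EFinP _ _).2 mg) (or_intror ig).
by rewrite -(fineK (integrable_fin_num measurableT ig)) => /EFin_half /(congr1 fine).
Qed.

Lemma L2_pcons (a : bool) (f : Omega -> R) : L2 mu f -> L2 mu (fun x => f (pcons a x)).
Proof.
move=> [mf if2]; have mfa := measurableT_comp mf (measurable_pcons a).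
split => //; pose G x := (f (pcons a x) ^+ 2)%:E.
have mG : measurable_fun [set: Omega] G by apply/measurable_EFinP; exact: measurable_funX.
have G0 x : (0 <= G x)%E by rewrite lee_fin sqr_ge0.
have on_a : (\int[mu]_(x in cyl [:: a]) G (shift x) = \int[mu]_(x in cyl [:: a]) (f x ^+ 2)%:E)%E.
  by apply: eq_integral => x /set_mem /cyl_cons [x0 _]; rewrite /G pcons_shift.
have := integral_cyl1_shift mu_cyl a mG (or_introl G0); rewrite on_a => intG.
apply/integrableP; split => //; under eq_integral do rewrite abse_EFin ger0_norm ?sqr_ge0 //.
have f2_fin : (\int[mu]_x (f x ^+ 2)%:E < +oo)%E.
  by move/integrableP : if2 => [_]; under eq_integral do rewrite abse_EFin ger0_norm ?sqr_ge0 //.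
have f2_a : (\int[mu]_(x in cyl [:: a]) (f x ^+ 2)%:E <= \int[mu]_x (f x ^+ 2)%:E)%E.
  apply: ge0_subset_integral => //; first exact: cyl_measurable.
    by apply/measurable_EFinP; exact: measurable_funX.
  by move=> x _; rewrite lee_fin sqr_ge0.
by rewrite -[X in (X < _)%E]/(\int[mu]_x G x)%E -intG lte_add_pinfty // (le_lt_trans f2_a).
Qed.

Lemma inner_koopman (f g : Omega -> R) : L2 mu f -> L2 mu g ->
  ip (koopman f) (koopman g) = ip f g.
Proof.
move=> Lf Lg; rewrite /inner; congr fine.
have mfg : measurable_fun [set: Omega] (fun x => (f x * g x)%:E).
  by apply/measurable_EFinP; apply: measurable_funM; [case: Lf | case: Lg].
have := integral_comp_preserving measurable_shift (shift_preserving mu_cyl) measurableT mfg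
  (or_intror (L2_integrable_mul Lf Lg)).
by rewrite preimage_setT.
Qed.

Lemma L2_koopman (f : Omega -> R) : L2 mu f -> L2 mu (koopman f).
Proof.
move=> [mf if2]; split; first exact: measurableT_comp mf measurable_shift.
have := integrable_comp_preserving measurable_shift (shift_preserving mu_cyl) measurableT
  ((measurable_EFinP _ _).2 (measurable_funX 2 mf)) if2.
by rewrite preimage_setT.
Qed.

(* On [cyl [:: a]], [g y = g (pcons a (shift y))]; integrating over each half
   turns [ip (koopman f) g] into the average defining [ruelle g]. *)
Lemma koopman_adjoint (f g : Omega -> R) : L2 mu f -> L2 mu g ->
  ip (koopman f) g = ip f (ruelle g).
Proof.
move=> Lf Lg; pose G a x := f x * g (pcons a x).
have iG a : mu.-integrable [set: Omega] (EFin \o G a).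
  exact: L2_integrable_mul Lf (L2_pcons a Lg).
have half a : (\int[mu]_(y in cyl [:: a]) (koopman f y * g y) = (\int[mu]_x G a x) / 2)%R.
  rewrite -(Rintegral_cyl1_shift a) //; last first.
    by apply: measurable_funM; [case: Lf | case: (L2_pcons a Lg)].
  by apply: eq_Rintegral => y /set_mem /cyl_cons [y0 _]; rewrite /G pcons_shift.
have iG2 a : mu.-integrable [set: Omega] (EFin \o (fun x => G a x / 2)).
  exact: (integrableZr measurableT 2^-1 (iG a)).
rewrite innerE -cyl_false_trueU Rintegral_setU ?half; try exact: cyl_measurable.
- rewrite innerE -!RintegralZr // -RintegralD //.
  by apply: eq_Rintegral => x _; rewrite /ruelle /G; ring.
- by rewrite cyl_false_trueU; exact: L2_integrable_mul (L2_koopman Lf) Lg.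
- by apply/disj_set2P; exact: cyl_false_trueI.
Qed.

End koopman_ruelle.

Section operator_norm.
Variables (R : realType) (mu : {measure set Omega -> \bar R}).
Local Notation ip := (inner mu).

Definition L2_contraction (T : (Omega -> R) -> (Omega -> R)) :=
  forall f, L2 mu f -> L2 mu (T f) /\ ip (T f) (T f) <= ip f f.

Definition attains_one (T : (Omega -> R) -> (Omega -> R)) :=
  exists f, [/\ L2 mu f, ip f f = 1 & ip (T f) (T f) = 1].

Lemma opnorm_eq1 (T : (Omega -> R) -> (Omega -> R)) :
  L2_contraction T -> attains_one T -> opnorm mu T = 1%E.
Proof.
move=> Tc [f0 [Lf0 f0f0 Tf0]]; apply/eqP; rewrite eq_le; apply/andP; split.
  apply: ub_ereal_sup => _ [f [mf Nf] <-].
  have [Lf ff] := L2_of_L2norm_le1 mf Nf; have [LTf le] := Tc f Lf.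
  by rewrite L2norm_inner // lee_fin -sqrtr1 ler_sqrt // (le_trans le ff).
apply: ereal_sup_ubound; exists f0; last by rewrite L2norm_inner ?Tf0 ?sqrtr1 //; case: (Tc f0 Lf0).
by split; [case: Lf0 | rewrite L2norm_inner // f0f0 sqrtr1].
Qed.

Lemma Hnorm_L2 (f g : Omega -> R) : L2 mu f -> L2 mu g ->
  Hnorm mu (f, g) = (Num.sqrt (ip f f + ip g g))%:E.
Proof.
move=> Lf Lg; rewrite /Hnorm /= !L2norm_inner // !poweR_EFin !powR_mulrn ?sqrtr_ge0 //.
by rewrite !sqr_sqrtr ?inner_ge0 // powR12_sqrt // addr_ge0 ?inner_ge0.
Qed.

Lemma L2_of_Hnorm_le1 (f g : Omega -> R) :
  measurable_fun [set: Omega] f -> measurable_fun [set: Omega] g ->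
  (Hnorm mu (f, g) <= 1)%E -> L2 mu f /\ L2 mu g.
Proof.
have powy (x : \bar R) : (x `^ 2%R)%E != -oo%E.
  by rewrite gt_eqF // (lt_le_trans _ (poweR_ge0 _ _)) // ltNy0.
case/(L2norm_cases mu) => [Nf|Lf]; case/(L2norm_cases mu) => [Ng|Lg] //;
  by rewrite /Hnorm /= ?Nf ?Ng poweRyr // ?addye ?addey // poweRyr // leye_eq.
Qed.

Lemma opnormH_swap_eq1 (T1 T2 : (Omega -> R) -> (Omega -> R)) :
  L2_contraction T1 -> L2_contraction T2 -> attains_one T1 ->
  opnormH mu (fun p => (T1 p.2, T2 p.1)) = 1%E.
Proof.
move=> T1c T2c [g0 [Lg0 g0g0 Tg0]]; apply/eqP; rewrite eq_le; apply/andP; split.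
  apply: ub_ereal_sup => _ [[f g] [/= mf mg Nfg] <-].
  have [Lf Lg] := L2_of_Hnorm_le1 mf mg Nfg.
  move: Nfg; have [LT1 le1] := T1c g Lg; have [LT2 le2] := T2c f Lf.
  rewrite /= !Hnorm_L2 // !lee_fin -sqrtr1 !ler_sqrt ?addr_ge0 ?inner_ge0 //.
  by apply: le_trans; rewrite addrC lerD.
have [LT20 T20] := T2c _ (L2_0 mu); rewrite inner0l in T20.
have T20_0 : ip (T2 (fun=> 0)) (T2 (fun=> 0)) = 0 by apply/eqP; rewrite eq_le T20 inner_ge0.
apply: ereal_sup_ubound; exists (fun=> 0, g0).
  split => /=; [exact: measurable_cst | by case: Lg0 |].
  by rewrite Hnorm_L2 ?inner0l ?g0g0 ?add0r ?sqrtr1 //; exact: L2_0.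
by rewrite /= Hnorm_L2 ?Tg0 ?T20_0 ?addr0 ?sqrtr1 //; case: (T1c g0 Lg0).
Qed.

End operator_norm.

Section rank_two.
Variables (R : realType) (mu : {measure set Omega -> \bar R}).
Local Notation ip := (inner mu).

Definition rank2 (e p q f : Omega -> R) : Omega -> R :=
  fun x => ip f e * p x + (- ip f q) * e x.

Variables (e p q : Omega -> R).
Hypotheses (Le : L2 mu e) (Lp : L2 mu p) (Lq : L2 mu q).
Hypotheses (ee : ip e e = 1) (pe0 : ip p e = 0) (eq0 : ip e q = 0).

Lemma inner_rank2 (f : Omega -> R) :
  ip (rank2 e p q f) (rank2 e p q f) = ip f e ^+ 2 * ip p p + ip f q ^+ 2.
Proof. by rewrite inner_lin_self // pe0 ee; ring. Qed.

Lemma rank2_contraction : ip p p <= 1 -> 0 < ip q q <= 1 ->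
  L2_contraction mu (rank2 e p q).
Proof.
move=> pp /andP [qq0 qq1] f Lf; split; first exact: L2_lin.
rewrite inner_rank2; apply: le_trans (bessel2 Lf Le Lq ee erefl qq0 eq0).
rewrite lerD ?ler_piMr ?sqr_ge0 // ler_peMr ?sqr_ge0 //.
by rewrite invf_ge1.
Qed.

End rank_two.

Section commutators.
Variables (R : realType) (mu : {measure set Omega -> \bar R}).
Hypothesis mu_cyl : forall v, mu (cyl v) = ((2 : R) ^- size v)%:E.
Variables (a : bool) (w : seq bool).
Local Notation ip := (inner mu).
Local Notation e := (e_w R (a :: w)).
Local Notation P := (proj_e mu (a :: w)).

Let Le : L2 mu e := L2_e_w mu_cyl (a :: w).
Let LKe : L2 mu (koopman e) := L2_koopman mu_cyl Le.
Let LLe : L2 mu (ruelle e).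
Proof. by rewrite ruelle_e_w_cons; apply: L2Z; exact: L2_e_w. Qed.

Let ee : ip e e = 1 := inner_e_w mu_cyl (a :: w).
Let KeKe : ip (koopman e) (koopman e) = 1.
Proof. by rewrite inner_koopman. Qed.
Let LeLe : ip (ruelle e) (ruelle e) = 2^-1.
Proof.
have Lw := L2_e_w mu_cyl w.
rewrite ruelle_e_w_cons (innerZl _ Lw (L2Z _ Lw)) (innerZr _ Lw Lw) inner_e_w //.
by rewrite mulr1 -invfM -expr2 sqr_sqrtr.
Qed.
Let e_Le : ip e (ruelle e) = 0.
Proof.
by rewrite ruelle_e_w_cons innerZr ?inner_e_w_lt ?mulr0 //; exact: L2_e_w.
Qed.
Let Ke_e : ip (koopman e) e = 0.
Proof. by rewrite koopman_adjoint. Qed.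

Lemma comm_koopmanE (f : Omega -> R) : L2 mu f ->
  comm (@koopman R) P f = rank2 mu e (koopman e) (ruelle e) f.
Proof.
move=> Lf; apply: funext => x.
by rewrite /comm /proj_e (koopman_adjoint mu_cyl) // /rank2 /koopman; ring.
Qed.

Lemma comm_ruelleE (f : Omega -> R) : L2 mu f ->
  comm (@ruelle R) P f = rank2 mu e (ruelle e) (koopman e) f.
Proof.
move=> Lf; apply: funext => x.
rewrite /comm /proj_e (innerC mu (ruelle f)) -(koopman_adjoint mu_cyl) //.
by rewrite (innerC mu (koopman e)) /rank2 /ruelle; ring.
Qed.

Lemma comm_koopman_contraction : L2_contraction mu (comm (@koopman R) P).
Proof.
move=> f Lf; rewrite comm_koopmanE //; apply: rank2_contraction => //.
- by rewrite KeKe.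
- by rewrite LeLe invr_gt0 ltr0n invf_le1 ?ler1n.
Qed.

Lemma comm_ruelle_contraction : L2_contraction mu (comm (@ruelle R) P).
Proof.
move=> f Lf; rewrite comm_ruelleE //; apply: rank2_contraction => //.
- by rewrite innerC.
- by rewrite innerC.
- by rewrite LeLe invf_le1 ?ler1n.
- by rewrite KeKe ltr01 lexx.
Qed.

Lemma comm_koopman_attains_one : attains_one mu (comm (@koopman R) P).
Proof.
exists e; split => //; rewrite comm_koopmanE // inner_rank2 //.
by rewrite ee e_Le KeKe; ring.
Qed.

Lemma comm_ruelle_attains_one : attains_one mu (comm (@ruelle R) P).
Proof.
exists (koopman e); split => //; rewrite comm_ruelleE // inner_rank2 //.
  by rewrite Ke_e KeKe; ring.
by rewrite innerC.
Qed.

End commutators.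

Theorem theorem2p4 (R : realType) (mu : {measure set Omega -> \bar R})
  (hmu : forall v : seq bool, mu (cyl v) = ((2 : R) ^- size v)%:E)
  (w : seq bool) (hw : (2 <= size w)%N) :
  [/\ opnorm mu (comm (@koopman R) (proj_e mu w)) = 1%E,
      opnorm mu (comm (@ruelle R) (proj_e mu w)) = 1%E
    & opnormH mu (Dcomm (proj_e mu w)) = 1%E].
Proof.
(* Only [w != [::]] is needed. *)
case: w hw => [//|a w] _; split.
- exact: opnorm_eq1 (comm_koopman_contraction hmu a w) (comm_koopman_attains_one hmu a w).
- exact: opnorm_eq1 (comm_ruelle_contraction hmu a w) (comm_ruelle_attains_one hmu a w).
- exact: opnormH_swap_eq1 (comm_koopman_contraction hmu a w) (comm_ruelle_contraction hmu a w)
    (comm_koopman_attains_one hmu a w).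
Qed.
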